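(* Let $n\ge 1$ and let $\boldsymbol{\gamma}^{[k]}=(\boldsymbol{\alpha}^{[k]},\boldsymbol{\beta}^{[k]})\in\mathscr{W}$, $k\ge 0$, be corner cutting weights such that $\sup_{k\ge 0}\mu(\boldsymbol{\gamma}^{[k]})<1$. Let $\mathbf{P}^{[0]}=\{P^{[0]}_i\in\mathbb{R}^n,\ i\in\mathbb{Z}\}$ be an initial sequence of points for which there is $L>0$ with $\|P^{[0]}_{i+1}-P^{[0]}_i\|_\infty<L$ for all $i\in\mathbb{Z}$, and let $\mathbf{P}^{[k+1]}=CC_{\boldsymbol{\gamma}^{[k]}}(\mathbf{P}^{[k]})$ for $k\ge 0$. Then the corner cutting algorithm converges for $\mathbf{P}^{[0]}$: there exists a continuous function $F:\mathbb{R}\to\mathbb{R}^n$ such that $$\lim_{k\to+\infty}\sup_{i\in\mathbb{Z}}\|F(2^{-k}i)-P^{[k]}_i\|_\infty=0.$$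
   Context: $\mathscr{W}$ is the set of pairs $(\boldsymbol{\alpha},\boldsymbol{\beta})$ of real bi-infinite sequences $\boldsymbol{\alpha}=(\alpha_i)_{i\in\mathbb{Z}}$, $\boldsymbol{\beta}=(\beta_i)_{i\in\mathbb{Z}}$ such that $\inf_{i\in\mathbb{Z}}\min\{\alpha_i,\,1-\beta_i,\,\beta_i-\alpha_i\}>0$. For $\boldsymbol{\gamma}=(\boldsymbol{\alpha},\boldsymbol{\beta})\in\mathscr{W}$, $\mu(\boldsymbol{\gamma}):=\sup_{i\in\mathbb{Z}}\max\{\beta_i-\alpha_i,\ 1-\beta_{i-1}+\alpha_i\}$. The corner cutting operator $CC_{\boldsymbol{\gamma}}$ maps a sequence $\mathbf{P}=(P_i)_{i\in\mathbb{Z}}$ of points of $\mathbb{R}^n$ to the sequence given by $(CC_{\boldsymbol{\gamma}}(\mathbf{P}))_{2i}=(1-\alpha_i)P_i+\alpha_iP_{i+1}$ and $(CC_{\boldsymbol{\gamma}}(\mathbf{P}))_{2i+1}=(1-\beta_i)P_i+\beta_iP_{i+1}$, $i\in\mathbb{Z}$. *)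

From Stdlib Require Import Reals ZArith Lia Lra.
From Coquelicot Require Import Coquelicot.
Open Scope R_scope.

(* A point of R^n is represented by its coordinate function; only the
   coordinates j < n are relevant (norm and continuity only look at them). *)
Definition pt := nat -> R.

Fixpoint norm_inf (n : nat) (x : pt) : R :=
  match n with
  | O => 0
  | S m => Rmax (norm_inf m x) (Rabs (x m))
  end.

Definition pt_sub (x y : pt) : pt := fun j => x j - y j.
Definition pt_comb (a : R) (x y : pt) : pt := fun j => (1 - a) * x j + a * y j.

Definition rseq := Z -> R.
Definition pseq := Z -> pt.

Definition in_W (alpha beta : rseq) : Prop :=
  Rbar_lt (Finite 0)
    (Glb_Rbar (fun x => exists i : Z,
       x = Rmin (alpha i) (Rmin (1 - beta i) (beta i - alpha i)))).

Definition mu (alpha beta : rseq) : Rbar :=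
  Lub_Rbar (fun x => exists i : Z,
    x = Rmax (beta i - alpha i) (1 - beta (i - 1)%Z + alpha i)).

Definition CC (alpha beta : rseq) (P : pseq) : pseq :=
  fun m => let i := (m / 2)%Z in
    if Z.even m then pt_comb (alpha i) (P i) (P (i + 1)%Z)
    else pt_comb (beta i) (P i) (P (i + 1)%Z).

From Stdlib Require Import Reals ZArith Lia Lra.
From Coquelicot Require Import Coquelicot.
Open Scope R_scope.

(* Work coordinatewise.  One corner cutting step turns the edges [p(i+1) - p(i)]
   into new edges made of at most two old edges, with total weight
   [b_i - a_i] (even new edges) or [1 - b_i + a_(i+1)] (odd ones); both are at
   most [q := sup_k mu(gamma_k)] < 1, so the edges at level k are O(q^k).
   Reading level k as the step function [t |-> p_k(floor(2^k t))], passing to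
   level k+1 moves it by at most one edge, so these step functions converge
   uniformly at a geometric rate.  The limit is continuous because the level-k
   step function oscillates by at most one edge on intervals of length 2^-k,
   and it is within O(q^k) of p_k(i) at t = i/2^k. *)

Lemma is_lim_seq_0_eventually_lt (e : nat -> R) (eps : R) :
  is_lim_seq e 0 -> 0 < eps -> exists N, forall k, (N <= k)%nat -> e k < eps.
Proof.
  intros he heps. apply is_lim_seq_spec in he.
  destruct (he (mkposreal eps heps)) as [N hN]. exists N. intros k hk.
  specialize (hN k hk). simpl in hN. rewrite Rminus_0_r in hN.
  eapply Rle_lt_trans; [apply Rle_abs | exact hN].
Qed.

Lemma is_lim_seq_geom_tail (C q : R) : 0 <= q < 1 ->
  is_lim_seq (fun k => C * q ^ k / (1 - q)) 0.
Proof.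
  intros hq.
  apply is_lim_seq_ext with (fun k => C / (1 - q) * q ^ k).
  { intros k. field. lra. }
  replace (Finite 0) with (Rbar_mult (C / (1 - q)) 0) by (simpl; f_equal; ring).
  apply is_lim_seq_scal_l, is_lim_seq_geom. rewrite Rabs_pos_eq; lra.
Qed.

Lemma Lim_seq_dist_le (u e : nat -> R) :
  is_lim_seq e 0 ->
  (forall k m, (k <= m)%nat -> Rabs (u m - u k) <= e k) ->
  forall k, Rabs (real (Lim_seq u) - u k) <= e k.
Proof.
  intros he hu.
  assert (hcauchy : ex_lim_seq_cauchy u).
  { intros eps. destruct (is_lim_seq_0_eventually_lt e (eps / 2) he) as [N hN].
    { destruct eps; simpl; lra. }
    exists N. intros m m' hm hm'.
    pose proof (hu N m hm). pose proof (hu N m' hm'). pose proof (hN N (le_n N)).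
    replace (u m - u m') with ((u m - u N) - (u m' - u N)) by ring.
    eapply Rle_lt_trans; [apply Rabs_triang|]. rewrite Rabs_Ropp. lra. }
  apply ex_lim_seq_cauchy_corr in hcauchy. destruct hcauchy as [l hl].
  rewrite (is_lim_seq_unique _ _ hl). intros k.
  assert (hlk : is_lim_seq (fun m => Rabs (u (m + k)%nat - u k)) (Rabs (l - u k))).
  { apply (is_lim_seq_abs _ (l - u k)), is_lim_seq_minus'.
    - apply (is_lim_seq_incr_n u k l), hl.
    - apply is_lim_seq_const. }
  apply (is_lim_seq_le _ _ _ _ (fun m => hu k (m + k)%nat ltac:(lia)) hlk
           (is_lim_seq_const (e k))).
Qed.

Lemma geom_increments_tail_le (u : nat -> R) (C q : R) : 0 <= q < 1 ->
  (forall k, Rabs (u (S k) - u k) <= C * q ^ k) ->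
  forall k m, (k <= m)%nat -> Rabs (u m - u k) <= C * q ^ k / (1 - q).
Proof.
  intros hq hu k m hkm.
  assert (hC : 0 <= C).
  { specialize (hu 0%nat). simpl in hu. pose proof (Rabs_pos (u 1%nat - u 0%nat)). lra. }
  assert (htele : forall d, Rabs (u (k + d)%nat - u k) <= C * (q ^ k - q ^ (k + d)) / (1 - q)).
  { induction d as [|d IHd].
    - rewrite Nat.add_0_r, Rminus_diag, Rabs_R0, Rminus_diag. unfold Rdiv. lra.
    - rewrite Nat.add_succ_r.
      replace (u (S (k + d)) - u k) with ((u (S (k + d)) - u (k + d)%nat) + (u (k + d)%nat - u k))
        by ring.
      eapply Rle_trans; [apply Rabs_triang|].
      replace (C * (q ^ k - q ^ S (k + d)) / (1 - q))
        with (C * q ^ (k + d) + C * (q ^ k - q ^ (k + d)) / (1 - q)) by (simpl; field; lra).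
      pose proof (hu (k + d)%nat). lra. }
  replace m with (k + (m - k))%nat by lia.
  eapply Rle_trans; [apply htele|].
  unfold Rdiv. apply Rmult_le_compat_r; [apply Rlt_le, Rinv_0_lt_compat; lra|].
  apply Rmult_le_compat_l; [exact hC|].
  pose proof (pow_le q (k + (m - k)) (proj1 hq)). lra.
Qed.

Lemma continuity_of_uniform_approx (F : R -> R) (g : nat -> R -> R) (e delta : nat -> R) :
  is_lim_seq e 0 -> (forall k, 0 < delta k) ->
  (forall k t, Rabs (F t - g k t) <= e k) ->
  (forall k x y, Rabs (x - y) < delta k -> Rabs (g k x - g k y) <= e k) ->
  continuity F.
Proof.
  intros he hdelta hFg hg x0 eps heps.
  destruct (is_lim_seq_0_eventually_lt e (eps / 3) he) as [N hN]; [lra|].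
  specialize (hN N (le_n N)).
  exists (delta N). split; [apply hdelta|].
  intros x [_ hx]. simpl in *. unfold R_dist in *.
  pose proof (hFg N x). pose proof (hFg N x0). pose proof (hg N x x0 hx).
  replace (F x - F x0) with ((F x - g N x) + (g N x - g N x0) - (F x0 - g N x0)) by ring.
  eapply Rle_lt_trans; [apply Rabs_triang|]. rewrite Rabs_Ropp.
  pose proof (Rabs_triang (F x - g N x) (g N x - g N x0)). lra.
Qed.

Lemma Int_part_IZR (z : Z) : Int_part (IZR z) = z.
Proof. symmetry. apply Int_part_spec. lra. Qed.

Lemma Int_part_double (x : R) :
  Int_part (2 * x) = (2 * Int_part x)%Z \/ Int_part (2 * x) = (2 * Int_part x + 1)%Z.
Proof.
  destruct (base_Int_part x).
  destruct (Rlt_or_le (2 * x) (2 * IZR (Int_part x) + 1)); [left|right];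
    symmetry; apply Int_part_spec; rewrite ?plus_IZR, mult_IZR; lra.
Qed.

Lemma Int_part_close (x y : R) : Rabs (x - y) < 1 ->
  Int_part x = Int_part y \/ Int_part x = (Int_part y + 1)%Z \/
  Int_part y = (Int_part x + 1)%Z.
Proof.
  intros hxy. apply Rabs_def2 in hxy.
  destruct (base_Int_part x), (base_Int_part y).
  assert (hlt : (Int_part x - Int_part y < 2)%Z) by (apply lt_IZR; rewrite minus_IZR; lra).
  assert (hgt : (-2 < Int_part x - Int_part y)%Z) by (apply lt_IZR; rewrite minus_IZR; lra).
  lia.
Qed.

Definition dyadic_step (u : Z -> R) (k : nat) (t : R) : R := u (Int_part (t * 2 ^ k)).

Lemma dyadic_step_IZR (u : Z -> R) (k : nat) (i : Z) :
  dyadic_step u k (IZR i / 2 ^ k) = u i.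
Proof.
  unfold dyadic_step. pose proof (pow_lt 2 k ltac:(lra)).
  replace (IZR i / 2 ^ k * 2 ^ k) with (IZR i) by (field; lra).
  now rewrite Int_part_IZR.
Qed.

Lemma dyadic_step_osc (u : Z -> R) (c : R) (k : nat) :
  (forall i, Rabs (u (i + 1)%Z - u i) <= c) ->
  forall x y, Rabs (x - y) < / 2 ^ k -> Rabs (dyadic_step u k x - dyadic_step u k y) <= c.
Proof.
  intros hu x y hxy. unfold dyadic_step.
  assert (hc : 0 <= c) by (eapply Rle_trans; [apply Rabs_pos | apply (hu 0%Z)]).
  assert (h2k : 0 < 2 ^ k) by (apply pow_lt; lra).
  assert (hclose : Rabs (x * 2 ^ k - y * 2 ^ k) < 1).
  { rewrite <- Rmult_minus_distr_r, Rabs_mult, (Rabs_pos_eq (2 ^ k)) by lra.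
    apply (Rmult_lt_compat_r (2 ^ k)) in hxy; [|lra]. now rewrite Rinv_l in hxy by lra. }
  destruct (Int_part_close _ _ hclose) as [-> | [-> | ->]].
  - rewrite Rminus_diag, Rabs_R0. exact hc.
  - apply hu.
  - rewrite Rabs_minus_sym. apply hu.
Qed.

Lemma dyadic_step_refine (u v : Z -> R) (c : R) (k : nat) :
  (forall i, Rabs (v (2 * i)%Z - u i) <= c) ->
  (forall i, Rabs (v (2 * i + 1)%Z - u i) <= c) ->
  forall t, Rabs (dyadic_step v (S k) t - dyadic_step u k t) <= c.
Proof.
  intros hev hod t. unfold dyadic_step.
  replace (t * 2 ^ S k) with (2 * (t * 2 ^ k)) by (simpl; ring).
  destruct (Int_part_double (t * 2 ^ k)) as [-> | ->]; auto.
Qed.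

Section CornerCuttingStep.

Variables (a b : rseq) (u v : Z -> R).
Hypothesis a_ge0 : forall i, 0 <= a i.
Hypothesis a_le_b : forall i, a i <= b i.
Hypothesis b_le1 : forall i, b i <= 1.
Hypothesis v_even : forall i, v (2 * i)%Z = (1 - a i) * u i + a i * u (i + 1)%Z.
Hypothesis v_odd : forall i, v (2 * i + 1)%Z = (1 - b i) * u i + b i * u (i + 1)%Z.

Variable D : R.
Hypothesis u_diff_le : forall i, Rabs (u (i + 1)%Z - u i) <= D.

Lemma cc_even_dist_le : forall i, Rabs (v (2 * i)%Z - u i) <= D.
Proof.
  intros i. rewrite v_even.
  replace ((1 - a i) * u i + a i * u (i + 1)%Z - u i) with (a i * (u (i + 1)%Z - u i)) by ring.
  rewrite Rabs_mult, Rabs_pos_eq by apply a_ge0.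
  pose proof (u_diff_le i). pose proof (Rabs_pos (u (i + 1)%Z - u i)).
  specialize (a_ge0 i). specialize (a_le_b i). specialize (b_le1 i). nra.
Qed.

Lemma cc_odd_dist_le : forall i, Rabs (v (2 * i + 1)%Z - u i) <= D.
Proof.
  intros i. rewrite v_odd.
  replace ((1 - b i) * u i + b i * u (i + 1)%Z - u i) with (b i * (u (i + 1)%Z - u i)) by ring.
  specialize (a_ge0 i). specialize (a_le_b i). specialize (b_le1 i).
  rewrite Rabs_mult, Rabs_pos_eq by lra.
  pose proof (u_diff_le i). pose proof (Rabs_pos (u (i + 1)%Z - u i)). nra.
Qed.

Lemma cc_diff_le (q : R) :
  (forall i, b i - a i <= q) -> (forall i, 1 - b i + a (i + 1)%Z <= q) ->
  forall m, Rabs (v (m + 1)%Z - v m) <= q * D.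
Proof.
  intros hgap hoverlap m.
  destruct (Z.Even_or_Odd m) as [[i ->] | [i ->]].
  - rewrite v_odd, v_even.
    replace ((1 - b i) * u i + b i * u (i + 1)%Z - ((1 - a i) * u i + a i * u (i + 1)%Z))
      with ((b i - a i) * (u (i + 1)%Z - u i)) by ring.
    specialize (a_le_b i). specialize (hgap i).
    rewrite Rabs_mult, Rabs_pos_eq by lra.
    pose proof (u_diff_le i). pose proof (Rabs_pos (u (i + 1)%Z - u i)). nra.
  - replace (2 * i + 1 + 1)%Z with (2 * (i + 1))%Z by lia.
    rewrite v_odd, v_even.
    replace ((1 - a (i + 1)%Z) * u (i + 1)%Z + a (i + 1)%Z * u (i + 1 + 1)%Z
             - ((1 - b i) * u i + b i * u (i + 1)%Z))
      with ((1 - b i) * (u (i + 1)%Z - u i) + a (i + 1)%Z * (u (i + 1 + 1)%Z - u (i + 1)%Z))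
      by ring.
    eapply Rle_trans; [apply Rabs_triang|].
    specialize (b_le1 i). specialize (a_ge0 (i + 1)%Z). specialize (hoverlap i).
    rewrite !Rabs_mult, (Rabs_pos_eq (1 - b i)), (Rabs_pos_eq (a (i + 1)%Z)) by lra.
    pose proof (u_diff_le i). pose proof (u_diff_le (i + 1)%Z).
    pose proof (Rabs_pos (u (i + 1)%Z - u i)). nra.
Qed.

End CornerCuttingStep.

Definition dyadic_limit (p : nat -> Z -> R) (t : R) : R :=
  real (Lim_seq (fun k => dyadic_step (p k) k t)).

Section CornerCuttingScheme.

Variables (a b : nat -> rseq) (p : nat -> Z -> R) (q L : R).
Hypothesis a_ge0 : forall k i, 0 <= a k i.
Hypothesis a_le_b : forall k i, a k i <= b k i.
Hypothesis b_le1 : forall k i, b k i <= 1.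
Hypothesis q_range : 0 <= q < 1.
Hypothesis gap_le : forall k i, b k i - a k i <= q.
Hypothesis overlap_le : forall k i, 1 - b k i + a k (i + 1)%Z <= q.
Hypothesis p_even : forall k i,
  p (S k) (2 * i)%Z = (1 - a k i) * p k i + a k i * p k (i + 1)%Z.
Hypothesis p_odd : forall k i,
  p (S k) (2 * i + 1)%Z = (1 - b k i) * p k i + b k i * p k (i + 1)%Z.
Hypothesis p0_diff_le : forall i, Rabs (p 0%nat (i + 1)%Z - p 0%nat i) <= L.

Lemma scheme_diff_le : forall k i, Rabs (p k (i + 1)%Z - p k i) <= L * q ^ k.
Proof.
  induction k as [|k IHk]; intros i.
  - rewrite Rmult_1_r. apply p0_diff_le.
  - rewrite <- tech_pow_Rmult, Rmult_comm, Rmult_assoc, (Rmult_comm _ L).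
    exact (cc_diff_le (a k) (b k) (p k) (p (S k)) (a_ge0 k) (a_le_b k) (b_le1 k)
             (p_even k) (p_odd k) _ IHk q (gap_le k) (overlap_le k) i).
Qed.

Lemma scheme_step_le (k : nat) (t : R) :
  Rabs (dyadic_step (p (S k)) (S k) t - dyadic_step (p k) k t) <= L * q ^ k.
Proof.
  apply dyadic_step_refine.
  - exact (cc_even_dist_le (a k) (b k) (p k) (p (S k)) (a_ge0 k) (a_le_b k) (b_le1 k)
             (p_even k) _ (scheme_diff_le k)).
  - exact (cc_odd_dist_le (a k) (b k) (p k) (p (S k)) (a_ge0 k) (a_le_b k) (b_le1 k)
             (p_odd k) _ (scheme_diff_le k)).
Qed.

Lemma dyadic_limit_dist_le (k : nat) (t : R) :
  Rabs (dyadic_limit p t - dyadic_step (p k) k t) <= L * q ^ k / (1 - q).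
Proof.
  apply (Lim_seq_dist_le (fun m => dyadic_step (p m) m t) (fun m => L * q ^ m / (1 - q))).
  - exact (is_lim_seq_geom_tail L q q_range).
  - exact (geom_increments_tail_le _ L q q_range (fun m => scheme_step_le m t)).
Qed.

Lemma dyadic_limit_continuous : continuity (dyadic_limit p).
Proof.
  apply (continuity_of_uniform_approx _ (fun k => dyadic_step (p k) k)
           (fun k => L * q ^ k / (1 - q)) (fun k => / 2 ^ k)).
  - exact (is_lim_seq_geom_tail L q q_range).
  - intros k. apply Rinv_0_lt_compat, pow_lt. lra.
  - exact dyadic_limit_dist_le.
  - intros k x y hxy. eapply Rle_trans.
    + exact (dyadic_step_osc (p k) _ k (scheme_diff_le k) x y hxy).
    + assert (0 <= L * q ^ k)
        by (eapply Rle_trans; [apply Rabs_pos | apply (scheme_diff_le k 0%Z)]).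
      unfold Rdiv. rewrite <- (Rmult_1_r (L * q ^ k)) at 1.
      apply Rmult_le_compat_l; [assumption|].
      rewrite <- Rinv_1. apply Rinv_le_contravar; lra.
Qed.

End CornerCuttingScheme.

Lemma in_W_weights (al be : rseq) : in_W al be ->
  forall i, 0 < al i /\ al i < be i /\ be i < 1.
Proof.
  unfold in_W. intros hW i.
  set (m := Rmin (al i) (Rmin (1 - be i) (be i - al i))).
  assert (hm : Rbar_le (Glb_Rbar (fun x => exists i : Z,
                 x = Rmin (al i) (Rmin (1 - be i) (be i - al i)))) m).
  { apply (proj1 (Glb_Rbar_correct _)). now exists i. }
  assert (hm0 : 0 < m).
  { destruct (Glb_Rbar _); simpl in hW, hm; [lra | contradiction | contradiction]. }
  unfold m in hm0.
  pose proof (Rmin_l (al i) (Rmin (1 - be i) (be i - al i))).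
  pose proof (Rmin_r (al i) (Rmin (1 - be i) (be i - al i))).
  pose proof (Rmin_l (1 - be i) (be i - al i)).
  pose proof (Rmin_r (1 - be i) (be i - al i)).
  lra.
Qed.

Lemma mu_le_bounds (al be : rseq) (q : R) : Rbar_le (mu al be) q ->
  forall i, be i - al i <= q /\ 1 - be i + al (i + 1)%Z <= q.
Proof.
  intros hmu i.
  assert (hterm : forall j, Rmax (be j - al j) (1 - be (j - 1)%Z + al j) <= q).
  { intros j. change (Rbar_le (Rmax (be j - al j) (1 - be (j - 1)%Z + al j)) q).
    apply (Rbar_le_trans _ (mu al be) _); [|exact hmu].
    apply (proj1 (Lub_Rbar_correct _)). now exists j. }
  pose proof (hterm i) as hi. pose proof (hterm (i + 1)%Z) as hi1.
  replace (i + 1 - 1)%Z with i in hi1 by ring.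
  pose proof (Rmax_l (be i - al i) (1 - be (i - 1)%Z + al i)).
  pose proof (Rmax_r (be (i + 1)%Z - al (i + 1)%Z) (1 - be i + al (i + 1)%Z)).
  lra.
Qed.

Lemma Rbar_lub_lt_1 (E : Rbar -> Prop) : Rbar_lt (Rbar_lub E) 1 ->
  exists q, 0 <= q < 1 /\ forall y, E y -> Rbar_le y q.
Proof.
  intros hlt. pose proof (proj1 (proj2_sig (Rbar_ex_lub E))) as hub.
  unfold Rbar_lub in hlt. destruct (proj1_sig (Rbar_ex_lub E)) as [r | |];
    simpl in hlt; try contradiction.
  - exists (Rmax r 0). split; [split; [apply Rmax_r | apply Rmax_lub_lt; [exact hlt | lra]] |].
    intros y hy. apply (Rbar_le_trans _ r); [now apply hub | apply Rmax_l].
  - exists 0. split; [lra|].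
    intros y hy. apply (Rbar_le_trans _ m_infty); [now apply hub | exact I].
Qed.

Lemma Rabs_le_norm_inf (n : nat) (x : pt) (j : nat) :
  (j < n)%nat -> Rabs (x j) <= norm_inf n x.
Proof.
  induction n as [|n IHn]; intros hj; [lia|]. simpl.
  destruct (Nat.eq_dec j n) as [-> | hne].
  - apply Rmax_r.
  - eapply Rle_trans; [apply IHn; lia | apply Rmax_l].
Qed.

Lemma norm_inf_le (n : nat) (x : pt) (c : R) : 0 <= c ->
  (forall j, (j < n)%nat -> Rabs (x j) <= c) -> norm_inf n x <= c.
Proof.
  intros hc. induction n as [|n IHn]; intros hx; simpl; [exact hc|].
  apply Rmax_lub; auto.
Qed.

Lemma Lub_Rbar_le (E : R -> Prop) (c : R) :
  (forall x, E x -> x <= c) -> Rbar_le (Lub_Rbar E) c.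
Proof. intros hE. apply (proj2 (Lub_Rbar_correct E)). exact hE. Qed.

Lemma CC_even (al be : rseq) (P : pseq) (i : Z) :
  CC al be P (2 * i)%Z = pt_comb (al i) (P i) (P (i + 1)%Z).
Proof.
  unfold CC. rewrite Z.even_mul, Z.mul_comm, Z.div_mul by lia. reflexivity.
Qed.

Lemma CC_odd (al be : rseq) (P : pseq) (i : Z) :
  CC al be P (2 * i + 1)%Z = pt_comb (be i) (P i) (P (i + 1)%Z).
Proof.
  unfold CC. rewrite Z.even_add, Z.even_mul.
  replace ((2 * i + 1) / 2)%Z with i by (apply (Z.div_unique _ _ _ 1); lia).
  reflexivity.
Qed.

Lemma CC_coord_dyadic_limit (n : nat) (alpha beta : nat -> rseq) (P : nat -> pseq)
  (q L : R) :
  (forall k i, 0 < alpha k i /\ alpha k i < beta k i /\ beta k i < 1) ->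
  0 <= q < 1 ->
  (forall k i, beta k i - alpha k i <= q /\ 1 - beta k i + alpha k (i + 1)%Z <= q) ->
  (forall k, P (S k) = CC (alpha k) (beta k) (P k)) ->
  (forall i, norm_inf n (pt_sub (P 0%nat (i + 1)%Z) (P 0%nat i)) <= L) ->
  forall j, (j < n)%nat ->
    continuity (dyadic_limit (fun k i => P k i j)) /\
    forall k i, Rabs (dyadic_limit (fun k i => P k i j) (IZR i / 2 ^ k) - P k i j)
                <= L * q ^ k / (1 - q).
Proof.
  intros hw hq hqb hP hL0 j hj.
  assert (ha0 : forall k i, 0 <= alpha k i) by (intros k i; apply Rlt_le, hw).
  assert (hab : forall k i, alpha k i <= beta k i) by (intros k i; apply Rlt_le, hw).
  assert (hb1 : forall k i, beta k i <= 1) by (intros k i; apply Rlt_le, hw).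
  assert (hgap : forall k i, beta k i - alpha k i <= q) by apply hqb.
  assert (hoverlap : forall k i, 1 - beta k i + alpha k (i + 1)%Z <= q) by apply hqb.
  assert (hev : forall k i, P (S k) (2 * i)%Z j
    = (1 - alpha k i) * P k i j + alpha k i * P k (i + 1)%Z j).
  { intros k i. now rewrite hP, CC_even. }
  assert (hod : forall k i, P (S k) (2 * i + 1)%Z j
    = (1 - beta k i) * P k i j + beta k i * P k (i + 1)%Z j).
  { intros k i. now rewrite hP, CC_odd. }
  assert (hdiff0 : forall i, Rabs (P 0%nat (i + 1)%Z j - P 0%nat i j) <= L).
  { intros i. eapply Rle_trans; [|apply hL0].
    exact (Rabs_le_norm_inf n (pt_sub (P 0%nat (i + 1)%Z) (P 0%nat i)) j hj). }
  split.
  - exact (dyadic_limit_continuous alpha beta (fun k i => P k i j) q L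
             ha0 hab hb1 hq hgap hoverlap hev hod hdiff0).
  - intros k i.
    pose proof (dyadic_limit_dist_le alpha beta (fun k i => P k i j) q L
                  ha0 hab hb1 hq hgap hoverlap hev hod hdiff0 k (IZR i / 2 ^ k)) as hdist.
    now rewrite dyadic_step_IZR in hdist.
Qed.

Theorem theorem1 (n : nat) (hn : (1 <= n)%nat)
  (alpha beta : nat -> rseq)
  (hW : forall k : nat, in_W (alpha k) (beta k))
  (hmu : Rbar_lt (Rbar_lub (fun y : Rbar => exists k : nat, y = mu (alpha k) (beta k)))
                 (Finite 1))
  (P : nat -> pseq)
  (hP0 : exists L : R, 0 < L /\
           forall i : Z, norm_inf n (pt_sub (P 0%nat (i + 1)%Z) (P 0%nat i)) < L)
  (hP : forall k : nat, P (S k) = CC (alpha k) (beta k) (P k)) :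
  exists F : R -> pt,
    (forall j : nat, (j < n)%nat -> continuity (fun t => F t j)) /\
    (forall eps : R, 0 < eps -> exists K : nat, forall k : nat, (K <= k)%nat ->
       Rbar_le
         (Lub_Rbar (fun x => exists i : Z,
            x = norm_inf n (pt_sub (F (IZR i / 2 ^ k)) (P k i))))
         (Finite eps)).
Proof.
  destruct hP0 as [L [hL hL0]].
  destruct (Rbar_lub_lt_1 _ hmu) as [q [hq hq_mu]].
  pose proof (fun k => in_W_weights _ _ (hW k)) as hw.
  pose proof (fun k => mu_le_bounds _ _ q (hq_mu _ (ex_intro _ k eq_refl))) as hqb.
  pose proof (CC_coord_dyadic_limit n alpha beta P q L hw hq hqb hP
                (fun i => Rlt_le _ _ (hL0 i))) as hspec.
  exists (fun t j => dyadic_limit (fun k i => P k i j) t). split.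
  - intros j hj. apply (hspec j hj).
  - intros eps heps.
    destruct (is_lim_seq_0_eventually_lt _ eps (is_lim_seq_geom_tail L q hq) heps)
      as [K hK].
    exists K. intros k hk. apply Lub_Rbar_le. intros x [i ->].
    apply norm_inf_le; [lra|]. intros j hj.
    pose proof (proj2 (hspec j hj) k i). pose proof (hK k hk). unfold pt_sub. lra.
Qed.
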